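(* Let $(X,\|\cdot,\cdot\|)$ be a $2$-normed space, $E\subseteq X$, and $f:E\to X$. If $f$ is statistically ward continuous on $E$, then $f$ is sequentially continuous on $E$: for every $x_0\in E$ and every sequence $(x_n)$ in $E$ converging to $x_0$, $(f(x_n))$ converges to $f(x_0)$.
   Context: A $2$-normed space is a real linear space $X$ with $\dim X>1$ together with a function $\|\cdot,\cdot\|:X^2\to\mathbb{R}$ such that for all $x,y,z\in X$, $\alpha\in\mathbb{R}$: (1) $\|x,y\|=0$ iff $x,y$ are linearly dependent; (2) $\|x,y\|=\|y,x\|$; (3) $\|\alpha x,y\|=|\alpha|\|x,y\|$; (4) $\|x,y+z\|\le\|x,y\|+\|x,z\|$. A sequence $(x_n)$ in $X$ converges to $x\in X$ if $\lim_{n\to\infty}\|x_n-x,z\|=0$ for every $z\in X$. For a sequence $(x_k)$ write $\Delta x_k=x_{k+1}-x_k$. A sequence $(x_k)$ in $X$ is statistically quasi-Cauchy if for every $\epsilon>0$ and every $z\in X$, $\lim_{n\to\infty}\frac1n|\{k\le n:\|\Delta x_k,z\|\ge\epsilon\}|=0$. A function $f:E\to X$ is statistically ward continuous on $E$ if $(f(x_k))$ is statistically quasi-Cauchy whenever $(x_k)$ is a statistically quasi-Cauchy sequence of points of $E$. *)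

From Stdlib Require Import Reals Lra Lia List ClassicalEpsilon.
Open Scope R_scope.

Record RVS := {
  car :> Type;
  vzero : car;
  vadd : car -> car -> car;
  vopp : car -> car;
  vscal : R -> car -> car;
  vadd_assoc : forall x y z, vadd x (vadd y z) = vadd (vadd x y) z;
  vadd_comm : forall x y, vadd x y = vadd y x;
  vadd_0 : forall x, vadd x vzero = x;
  vadd_opp : forall x, vadd x (vopp x) = vzero;
  vscal_1 : forall x, vscal 1 x = x;
  vscal_assoc : forall a b x, vscal a (vscal b x) = vscal (a * b) x;
  vscal_distr_v : forall a x y, vscal a (vadd x y) = vadd (vscal a x) (vscal a y);
  vscal_distr_s : forall a b x, vscal (a + b) x = vadd (vscal a x) (vscal b x)
}.

Definition vsub {X : RVS} (x y : X) : X := vadd X x (vopp X y).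

Definition lin_dep {X : RVS} (x y : X) : Prop :=
  exists a b : R, (a <> 0 \/ b <> 0) /\ vadd X (vscal X a x) (vscal X b y) = vzero X.

Record TwoNormed := {
  tn_space :> RVS;
  tn : tn_space -> tn_space -> R;
  tn_dim : exists x y : tn_space, ~ lin_dep x y;
  tn_zero : forall x y, tn x y = 0 <-> lin_dep x y;
  tn_sym : forall x y, tn x y = tn y x;
  tn_scal : forall (a : R) x y, tn (vscal tn_space a x) y = Rabs a * tn x y;
  tn_tri : forall x y z, tn x (vadd tn_space y z) <= tn x y + tn x z
}.

Definition tn_conv {X : TwoNormed} (u : nat -> X) (l : X) : Prop :=
  forall z : X, Un_cv (fun n => tn X (vsub (u n) l) z) 0.

Definition delta {X : RVS} (u : nat -> X) (k : nat) : X := vsub (u (S k)) (u k).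

(* #{ k in {1,...,n} : P k } (sequences indexed from 1 in the paper:
   index k of the paper is index (k-1) here, i.e. k in {0,...,n-1}) *)
Definition count_lt (P : nat -> Prop) (n : nat) : nat :=
  length (filter (fun k => if excluded_middle_informative (P k) then true else false)
                 (seq 0 n)).

Definition stat_quasi_cauchy {X : TwoNormed} (u : nat -> X) : Prop :=
  forall (eps : R) (z : X), eps > 0 ->
    Un_cv (fun n => INR (count_lt (fun k => tn X (delta u k) z >= eps) n) / INR n) 0.

Definition stat_ward_continuous {X : TwoNormed} (E : X -> Prop) (f : X -> X) : Prop :=
  forall u : nat -> X, (forall n, E (u n)) -> stat_quasi_cauchy u ->
    stat_quasi_cauchy (fun n => f (u n)).

(* Suppose f is statistically ward continuous on E, u_n -> x0 in E, but
   f(u_n) does not converge to f(x0): then for some z and eps > 0 there is a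
   subsequence y_j = u_(phi j) with ||f(y_j) - f(x0), z|| >= eps for all j.
   Interleave x0 with this subsequence: w = (x0, y_0, x0, y_1, ...).
   Every difference of w has the 2-norm of some y_j - x0, and y_j -> x0, so
   w is quasi-Cauchy, hence statistically quasi-Cauchy.  Every difference
   of f(w) has the 2-norm of some f(y_j) - f(x0), which is >= eps, so f(w)
   is not statistically quasi-Cauchy: a contradiction. *)

From Stdlib Require Import Reals Lra Lia Arith List Classical ClassicalEpsilon.
Open Scope R_scope.

Section TwoNormFacts.
Variable X : TwoNormed.

Lemma vopp_unique (v w : X) : vadd X v w = vzero X -> w = vopp X v.
Proof.
  intro Hvw.
  rewrite <- (vadd_0 X w), <- (vadd_opp X v), vadd_assoc, (vadd_comm X w v), Hvw.
  rewrite vadd_comm. apply vadd_0.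
Qed.

Lemma vscal_0 (v : X) : vscal X 0 v = vzero X.
Proof.
  assert (Hdouble : vscal X 0 v = vadd X (vscal X 0 v) (vscal X 0 v)).
  { rewrite <- vscal_distr_s. f_equal. lra. }
  rewrite <- (vadd_opp X (vscal X 0 v)).
  rewrite Hdouble at 2. rewrite <- vadd_assoc, vadd_opp, vadd_0. reflexivity.
Qed.

Lemma vscal_m1 (v : X) : vscal X (-1) v = vopp X v.
Proof.
  apply vopp_unique.
  rewrite <- (vscal_1 X v) at 1. rewrite <- vscal_distr_s.
  replace (1 + -1) with 0 by lra. apply vscal_0.
Qed.

Lemma vsub_antisym (a b : X) : vsub a b = vopp X (vsub b a).
Proof.
  apply vopp_unique. unfold vsub.
  rewrite vadd_assoc, <- (vadd_assoc X b (vopp X a) a).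
  rewrite (vadd_comm X (vopp X a) a), vadd_opp, vadd_0. apply vadd_opp.
Qed.

Lemma tn_opp (a z : X) : tn X (vopp X a) z = tn X a z.
Proof.
  rewrite <- vscal_m1, tn_scal, Rabs_left by lra. lra.
Qed.

Lemma tn_vsub_sym (a b z : X) : tn X (vsub a b) z = tn X (vsub b a) z.
Proof. rewrite vsub_antisym. apply tn_opp. Qed.

(* 2-norms are nonnegative: 0 = ||z, a - a|| <= 2 ||a, z||. *)
Lemma tn_nonneg (a z : X) : 0 <= tn X a z.
Proof.
  assert (Hz0 : tn X z (vzero X) = 0).
  { apply tn_zero. exists 0, 1. split; [right; lra|].
    rewrite vscal_0, vscal_1. apply vadd_0. }
  assert (Htri := tn_tri X z a (vopp X a)).
  rewrite vadd_opp, Hz0, (tn_sym X z (vopp X a)), tn_opp, (tn_sym X z a) in Htri.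
  lra.
Qed.

End TwoNormFacts.

Definition quasi_cauchy {X : TwoNormed} (u : nat -> X) : Prop :=
  forall (eps : R) (z : X), eps > 0 ->
    exists N, forall k, (k >= N)%nat -> tn X (delta u k) z < eps.

Lemma count_lt_bounded (P : nat -> Prop) (N : nat) :
  (forall k, (k >= N)%nat -> ~ P k) -> forall n, (count_lt P n <= N)%nat.
Proof.
  intros HP n. induction n as [|n IHn]; [unfold count_lt; simpl; lia|].
  unfold count_lt in *. rewrite seq_S, filter_app, length_app. simpl.
  destruct (excluded_middle_informative (P n)) as [Pn|]; simpl; [|lia].
  destruct (le_lt_dec N n) as [HNn|HnN]; [exfalso; exact (HP n HNn Pn)|].
  assert (Hle := filter_length_le
    (fun k => if excluded_middle_informative (P k) then true else false) (seq 0 n)).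
  rewrite length_seq in Hle. lia.
Qed.

Lemma count_lt_full (P : nat -> Prop) (n : nat) : (forall k, P k) -> count_lt P n = n.
Proof.
  intro HP. unfold count_lt.
  rewrite (proj2 (filter_ext_in_iff _ (fun _ => true) _)).
  - rewrite filter_true. apply length_seq.
  - intros k _. destruct (excluded_middle_informative (P k)) as [_|HnP];
      [reflexivity | contradiction (HnP (HP k))].
Qed.

Lemma bounded_count_density0 (c : nat -> nat) (N : nat) :
  (forall n, (c n <= N)%nat) -> Un_cv (fun n => INR (c n) / INR n) 0.
Proof.
  intros Hc eps Heps.
  destruct (INR_unbounded (INR N / eps)) as [M HM].
  exists (S M). intros n Hn. unfold Rdist. rewrite Rminus_0_r.
  assert (Hn_pos : 0 < INR n) by (apply lt_0_INR; lia).
  assert (HMn : INR M <= INR n) by (apply le_INR; lia).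
  assert (Hcn : INR (c n) <= INR N) by (apply le_INR, Hc).
  assert (Hc0 : 0 <= INR (c n)) by apply pos_INR.
  rewrite Rabs_pos_eq by (apply Rle_mult_inv_pos; lra).
  apply Rmult_lt_reg_r with (INR n); [lra|].
  unfold Rdiv. rewrite Rmult_assoc, Rinv_l, Rmult_1_r by lra.
  assert (HN : INR N = INR N / eps * eps) by (field; lra).
  nra.
Qed.

Lemma quasi_cauchy_stat {X : TwoNormed} (u : nat -> X) :
  quasi_cauchy u -> stat_quasi_cauchy u.
Proof.
  intros Hqc eps z Heps.
  destruct (Hqc eps z Heps) as [N HN].
  apply (bounded_count_density0 _ N), count_lt_bounded.
  intros k Hk Hge. specialize (HN k Hk). lra.
Qed.

Lemma uniformly_apart_not_stat {X : TwoNormed} (u : nat -> X) (eps : R) (z : X) :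
  eps > 0 -> (forall k, tn X (delta u k) z >= eps) -> ~ stat_quasi_cauchy u.
Proof.
  intros Heps Hapart Hsqc.
  destruct (Hsqc eps z Heps (1/2)) as [N HN]; [lra|].
  specialize (HN (S N) ltac:(lia)).
  rewrite (count_lt_full _ _ Hapart) in HN.
  unfold Rdist in HN. rewrite Rminus_0_r, Rdiv_diag, Rabs_R1 in HN
    by (apply not_0_INR; lia).
  lra.
Qed.

Definition interleave {A : Type} (a : A) (b : nat -> A) (k : nat) : A :=
  if Nat.even k then a else b (Nat.div2 k).

Lemma map_interleave {A B : Type} (g : A -> B) (a : A) (b : nat -> A) (k : nat) :
  g (interleave a b k) = interleave (g a) (fun j => g (b j)) k.
Proof. unfold interleave. destruct (Nat.even k); reflexivity. Qed.

Lemma tn_delta_interleave {X : TwoNormed} (a : X) (b : nat -> X) (k : nat) (z : X) :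
  tn X (delta (interleave a b) k) z = tn X (vsub (b (Nat.div2 k)) a) z.
Proof.
  unfold delta, interleave.
  destruct (Nat.Even_or_Odd k) as [[j ->]|[j ->]].
  - rewrite Nat.even_succ, Nat.odd_even, Nat.even_even, Nat.div2_succ_double,
      Nat.div2_double. reflexivity.
  - replace (S (2 * j + 1)) with (2 * S j)%nat by lia.
    replace (2 * j + 1)%nat with (S (2 * j)) by lia.
    rewrite Nat.even_even, Nat.even_succ, Nat.odd_even, Nat.div2_succ_double.
    apply tn_vsub_sym.
Qed.

Lemma interleave_quasi_cauchy {X : TwoNormed} (a : X) (b : nat -> X) :
  tn_conv b a -> quasi_cauchy (interleave a b).
Proof.
  intros Hconv eps z Heps.
  destruct (Hconv z eps Heps) as [N HN].
  exists (2 * N)%nat. intros k Hk.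
  rewrite tn_delta_interleave.
  assert (Hhalf : (Nat.div2 k >= N)%nat)
    by (pose proof (Nat.div2_odd k); destruct (Nat.odd k); simpl in *; lia).
  specialize (HN _ Hhalf). unfold Rdist in HN. rewrite Rminus_0_r in HN.
  eapply Rle_lt_trans; [apply Rle_abs | exact HN].
Qed.

Lemma tn_conv_subseq {X : TwoNormed} (u : nat -> X) (l : X) (phi : nat -> nat) :
  (forall j, (phi j >= j)%nat) -> tn_conv u l -> tn_conv (fun j => u (phi j)) l.
Proof.
  intros Hphi Hconv z eps Heps.
  destruct (Hconv z eps Heps) as [N HN].
  exists N. intros j Hj. apply HN. specialize (Hphi j). lia.
Qed.

Lemma not_cv0_subseq (a : nat -> R) :
  (forall n, 0 <= a n) -> ~ Un_cv a 0 ->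
  exists eps, eps > 0 /\
    exists phi : nat -> nat, forall j, (phi j >= j)%nat /\ a (phi j) >= eps.
Proof.
  intros Hpos Hncv.
  apply not_all_ex_not in Hncv as [eps Heps].
  apply imply_to_and in Heps as [Heps Hno_N].
  exists eps. split; [exact Heps|].
  assert (Hfreq : forall N, exists n, (n >= N)%nat /\ a n >= eps).
  { intro N. apply not_all_not_ex. intro Hnone. apply Hno_N. exists N.
    intros n Hn. unfold Rdist. rewrite Rminus_0_r, Rabs_pos_eq by apply Hpos.
    specialize (Hnone n). apply not_and_or in Hnone as [|Hlt]; [contradiction|lra]. }
  apply (choice (fun N n => (n >= N)%nat /\ a n >= eps)), Hfreq.
Qed.

Theorem corollary3p1 (X : TwoNormed) (E : X -> Prop) (f : X -> X) :
  stat_ward_continuous E f ->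
  forall (x0 : X) (u : nat -> X),
    E x0 -> (forall n, E (u n)) -> tn_conv u x0 ->
    tn_conv (fun n => f (u n)) (f x0).
Proof.
  intros Hsw x0 u Hx0 HE Hu z.
  apply NNPP. intro Hncv.
  destruct (not_cv0_subseq _ (fun n => tn_nonneg X _ z) Hncv)
    as [eps [Heps [phi Hphi]]].
  set (w := interleave x0 (fun j => u (phi j))).
  assert (Hw_E : forall k, E (w k))
    by (intro k; unfold w, interleave; destruct (Nat.even k); auto).
  assert (Hw_sqc : stat_quasi_cauchy w).
  { apply quasi_cauchy_stat, interleave_quasi_cauchy, tn_conv_subseq; trivial.
    intro j. apply Hphi. }
  apply (uniformly_apart_not_stat (fun k => f (w k)) eps z Heps);
    [|exact (Hsw w Hw_E Hw_sqc)].
  intro k.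
  replace (delta (fun k => f (w k)) k)
    with (delta (interleave (f x0) (fun j => f (u (phi j)))) k)
    by (unfold delta, w; rewrite !(map_interleave f); reflexivity).
  rewrite tn_delta_interleave. apply Hphi.
Qed.
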